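(* For every $T>0$, $$\sup_{t\in[0,T]}\Bigl|\int_0^t Y^N(s)\,\widetilde Z^N(s)\,ds\Bigr|\to0$$ in probability as $N\to\infty$.
   Context: Model. Fix $\tau>0$, $\mu\ge 0$, $N\in\mathbb N$, and write $L=\lfloor \tau N\rfloor$. The state space is $\Omega_N=[0,\infty)^{L+1}$, with elements $x=(x_{-L},\dots,x_0)$. Define $\theta_N^\pm:\Omega_N\to\Omega_N$ by $(\theta_N^\pm x)_j=x_{j+1}$ for $-L\le j<0$, $(\theta_N^+x)_0=x_0(1+\frac1N)$, $(\theta_N^-x)_0=\max\{x_0(1-\frac{x_{-L}}{N^2}),0\}$. Let $\xi^N=(\xi^N(n))_{n\ge0}$ be the discrete-time Markov chain on $\Omega_N$ moving from $x$ to $\theta_N^+x$ or $\theta_N^-x$ with probability $1/2$ each, with $\xi^N_j(0)=\mu N$ for all $j$. Let $(\sigma_n)_{n\ge1}$ be i.i.d. Exp(1), independent of $\xi^N$, $J_0=0$, $J_n=\sigma_1+\dots+\sigma_n$, and $X^N(t)=\xi^N(n)$ for $t\in[J_n,J_{n+1})$. For $t\ge0$: $Y^N(t)=X^N_0(Nt)/N$, $Z^N(t)=X^N_{-L}(Nt)/N$, $\widetilde Z^N(t)=Z^N(t)-\min\{Z^N(t),N\}$. *)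

From HB Require Import structures.
From mathcomp Require Import all_boot all_order all_algebra.
From mathcomp Require Import all_classical all_reals all_analysis.
Set Implicit Arguments. Unset Strict Implicit. Unset Printing Implicit Defensive.
Import Order.TTheory GRing.Theory Num.Theory.
Import numFieldNormedType.Exports.
Local Open Scope classical_set_scope.
Local Open Scope ring_scope.

(* A state x = (x_{-L},...,x_0) is encoded as x : nat -> R with x k = x_{-k};
   only the coordinates k <= L matter (coordinates k <= L never depend on
   coordinates k > L). *)
Section Model.
Context {R : realType}.

Definition Lof (tau : R) (N : nat) : nat := Num.truncn (tau * N%:R).

Definition theta_plus (N : nat) (x : nat -> R) : nat -> R :=
  fun k => if k is k'.+1 then x k' else x 0%N * (1 + N%:R^-1).

Definition theta_minus (L N : nat) (x : nat -> R) : nat -> R :=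
  fun k => if k is k'.+1 then x k'
           else Num.max (x 0%N * (1 - x L / (N%:R ^+ 2))) 0.

Fixpoint chain (L N : nat) (mu : R) (c : nat -> R) (n : nat) : nat -> R :=
  match n with
  | 0%N => fun _ => mu * N%:R
  | n'.+1 => let x := chain L N mu c n' in
             if c n' == 1 then theta_plus N x else theta_minus L N x
  end.

(* J_n = sigma_1 + ... + sigma_n  (sigma is indexed from 0 here) *)
Definition jump_time (s : nat -> R) (n : nat) : R := \sum_(i < n) s i.

(* X^N(t) = xi^N(n) for t in [J_n, J_{n+1}); on the null event where no such
   n exists, an arbitrary index (0) is used. *)
Definition Xproc (L N : nat) (mu : R) (c s : nat -> R) (t : R) : nat -> R :=
  chain L N mu c (xget 0%N [set n | jump_time s n <= t < jump_time s n.+1]).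

Definition Yproc L N mu c s (t : R) : R := Xproc L N mu c s (N%:R * t) 0%N / N%:R.
Definition Zproc L N mu c s (t : R) : R := Xproc L N mu c s (N%:R * t) L / N%:R.
Definition Ztil L N mu c s (t : R) : R :=
  Zproc L N mu c s t - Num.min (Zproc L N mu c s t) N%:R.

Definition integral_YZ L N mu c s (t : R) : R :=
  Rintegral lebesgue_measure `[0, t] (fun u => Yproc L N mu c s u * Ztil L N mu c s u).

End Model.

Section Prob.
Context {d : measure_display} {T : measurableType d} {R : realType}.

Definition mutual_indep (P : probability T R) (I : eqType) (X : I -> T -> R) : Prop :=
  (forall i, measurable_fun setT (X i)) /\
  forall (s : seq I) (B : I -> set R), uniq s -> (forall i, measurable (B i)) ->
    P (\bigcap_(i in [set` s]) (X i @^-1` B i)) =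
    (\big[*%E/1%E]_(i <- s) P (X i @^-1` B i))%E.

Definition fair_coin (P : probability T R) (X : T -> R) : Prop :=
  P (X @^-1` [set 1]) = (1/2)%:E /\ P (X @^-1` [set 0]) = (1/2)%:E.

Definition exp1_distributed (P : probability T R) (X : T -> R) : Prop :=
  forall x : R, P (X @^-1` `]-oo, x]) = (if 0 <= x then 1 - expR (- x) else 0)%:E.

(* For measurable events this is the
   usual P(V_N > eps) -> 0. *)
Definition cvg_in_prob0 (P : probability T R) (V : nat -> T -> \bar R) : Prop :=
  forall eps delta : R, 0 < eps -> 0 < delta ->
    \forall N \near \oo, exists B : set T,
      [/\ measurable B, [set w | (eps%:E < V N w)%E] `<=` B & (P B < delta%:E)%E].

End Prob.

(* On the time window [0, Tm] the process Y^N, Z^N runs the chain xi^N for about N Tm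
   steps.  Each step multiplies a coordinate by at most 1 + 1/N, so after at most N k
   steps every coordinate is at most mu N e^k, which is below N^2 once N is large; then
   Z^N <= N, Ztilde^N vanishes and so does the integral.  It remains to see that
   J_{N k} > N Tm except with probability at most 4 Tm / k: if J_{N k} <= N Tm, at
   least half of sigma_1, ..., sigma_{N k} are at most 2 Tm / k, and by Markov's
   inequality applied to the number of such sigma_i this has probability at most
   4 Tm / k. *)

From HB Require Import structures.
From mathcomp Require Import all_boot all_order all_algebra.
From mathcomp Require Import all_classical all_reals all_analysis.
From mathcomp Require Import measurable_realfun ring lra.
Set Implicit Arguments. Unset Strict Implicit. Unset Printing Implicit Defensive.
Import Order.TTheory GRing.Theory Num.Theory.
Local Open Scope classical_set_scope.
Local Open Scope ring_scope.

Section ChainBounds.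
Context {R : realType}.
Variables (L N : nat) (mu : R) (c : nat -> R).
Hypothesis mu_ge0 : 0 <= mu.

Let q : R := 1 + N%:R^-1.

Let q_ge1 : 1 <= q.
Proof. by rewrite /q lerDl invr_ge0 ler0n. Qed.

Lemma chain_bounds (n k : nat) : 0 <= chain L N mu c n k <= mu * N%:R * q ^+ n.
Proof.
have bound_ge0 m : 0 <= mu * N%:R * q ^+ m.
  by rewrite !mulr_ge0 // exprn_ge0 // (le_trans _ q_ge1).
elim: n k => [|n IH] k /=; first by rewrite expr0 mulr1 lexx mulr_ge0.
have /andP[x0_ge0 x0_le] := IH 0%N.
have bound_le : mu * N%:R * q ^+ n <= mu * N%:R * q ^+ n.+1.
  by rewrite exprSr mulrA ler_peMr.
case: k => [|k].
  case: (c n == 1) => /=.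
  - rewrite mulr_ge0 ?x0_ge0 ?(le_trans _ q_ge1) //= exprSr mulrA.
    by rewrite ler_wpM2r // (le_trans _ q_ge1).
  - rewrite le_max lexx orbT /= ge_max bound_ge0 andbT.
    apply: le_trans bound_le; apply: le_trans x0_le.
    rewrite ler_piMr // lerBlDr lerDl mulr_ge0 ?invr_ge0 ?exprn_ge0 //.
    by have /andP[] := IH L.
have /andP[xk_ge0 xk_le] := IH k.
by case: (c n == 1); rewrite /= xk_ge0 (le_trans xk_le).
Qed.

Lemma pow1Dinv_le_expR (k n : nat) : (0 < N)%N -> (n <= N * k)%N -> q ^+ n <= expR k%:R.
Proof.
move=> N_gt0 n_le.
apply: (le_trans (ler_weXn2l q_ge1 n_le)).
apply: (@le_trans _ _ (expR (N%:R^-1) ^+ (N * k))).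
  by rewrite lerXn2r ?nnegrE ?expR_ge0 ?(le_trans _ q_ge1) ?expR_ge1Dx.
by rewrite -expRM_natl natrM mulrAC mulfV ?mul1r // pnatr_eq0 -lt0n.
Qed.

End ChainBounds.

Lemma jump_time_le (R : realType) (s : nat -> R) (m n : nat) :
  (forall i, 0 <= s i) -> (m <= n)%N -> jump_time s m <= jump_time s n.
Proof.
move=> s_ge0 mn; rewrite /jump_time -!(big_mkord xpredT) (big_cat_nat (leq0n m) mn) /=.
by rewrite lerDl sumr_ge0.
Qed.

(* Up to time N Tm the chain makes at most N k steps, so it stays below N^2 and
   Ztilde^N vanishes on [0, Tm]. *)
Lemma integral_YZ_eq0 (R : realType) (L N k : nat) (mu Tm : R) (c s : nat -> R) :
  (0 < N)%N -> 0 <= mu -> mu * expR k%:R < N%:R -> (forall i, 0 <= s i) ->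
  N%:R * Tm < jump_time s (N * k) ->
  forall t, 0 <= t <= Tm -> integral_YZ L N mu c s t = 0.
Proof.
move=> N_gt0 mu_ge0 muN s_ge0 slow t /andP[_ t_le].
have NR_gt0 : 0 < N%:R :> R by rewrite ltr0n.
suff Ztil0 u : 0 <= u <= t -> Ztil L N mu c s u = 0.
  rewrite /integral_YZ (eq_Rintegral _ (g := fun=> 0)) /Rintegral ?integral0 //.
  by move=> u; rewrite inE /= in_itv /= => /Ztil0 ->; rewrite mulr0.
move=> /andP[_ u_le]; rewrite /Ztil /Zproc /Xproc.
set n := xget _ _.
have n_le : (n <= N * k)%N.
  rewrite /n; case: xgetP => [x _ /= /andP[Jx _]|_] //.
  rewrite leqNgt; apply/negP => /ltnW /(jump_time_le s_ge0) Jle.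
  have : N%:R * u <= N%:R * Tm by rewrite ler_pM2l // (le_trans u_le t_le).
  by move=> /(le_trans Jx) /le_lt_trans /(_ slow) /lt_le_trans /(_ Jle); rewrite ltxx.
rewrite min_l ?subrr // ler_pdivrMr //.
have /andP[_ chain_le] := chain_bounds L N c mu_ge0 n L.
apply: (le_trans chain_le); rewrite -mulrA mulrC -mulrA ler_pM2l // mulrC.
by apply: le_trans (ltW muN); rewrite ler_wpM2l // pow1Dinv_le_expR.
Qed.

Lemma half_le_count_small (R : realType) (s : nat -> R) (m : nat) (a : R) :
  (0 < m)%N -> 0 < a -> (forall i, 0 <= s i) -> \sum_(i < m) s i <= a ->
  m%:R / 2 <= \sum_(i < m) ((s i <= 2 * a / m%:R)%R)%:R :> R.
Proof.
move=> m_gt0 a_gt0 s_ge0 sum_le.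
set b := 2 * a / m%:R; set K := \sum_(i < m) _.
have mR_gt0 : 0 < m%:R :> R by rewrite ltr0n.
have b_gt0 : 0 < b by rewrite /b divr_gt0 // mulr_gt0.
have large_le : \sum_(i < m) b * (1 - ((s i <= b)%R)%:R) <= a.
  apply: le_trans sum_le; apply: ler_sum => i _.
  by case: (leP (s i) b) => [_|/ltW]; rewrite ?subrr ?mulr0 ?subr0 ?mulr1.
rewrite -mulr_sumr sumrB sumr_const card_ord -/K in large_le.
have : a * (2 * (m%:R - K)) <= a * m%:R.
  have -> : a * (2 * (m%:R - K)) = b * (m%:R - K) * m%:R.
    by rewrite /b; field; rewrite pnatr_eq0 -lt0n.
  by apply: ler_wpM2r.
by rewrite ler_pM2l // ler_pdivrMr ?ltr0Sn //; lra.
Qed.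

Definition hit_half (R : realType) (T : Type) (A : nat -> set T) (m : nat) : set T :=
  [set w | m%:R / 2 <= \sum_(i < m) \1_(A i) w :> R].

Section MarkovCount.
Context {d : measure_display} {T : measurableType d} {R : realType}.
Variables (P : probability T R) (A : nat -> set T) (m : nat).
Hypothesis mA : forall i, measurable (A i).

Let count_measurable : measurable_fun setT (fun w => \sum_(i < m) \1_(A i) w : R).
Proof. by apply: measurable_sum => i; exact: measurable_indic. Qed.

Lemma measurable_hit_half : measurable (hit_half R A m).
Proof.
have := count_measurable measurableT (measurable_itv `[m%:R / 2, +oo[).
by rewrite setTI; congr measurable; apply/seteqP; split => w /=; rewrite in_itv /= andbT.
Qed.

Lemma markov_hit_half : ((m%:R / 2)%:E * P (hit_half R A m) <= \sum_(i < m) P (A i))%E.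
Proof.
have mind (B : set T) : measurable B -> measurable_fun setT (fun w => (\1_B w : R)%:E).
  by move=> mB; apply/measurable_EFinP; exact: measurable_indic.
have -> : P (hit_half R A m) = (\int[P]_w (\1_(hit_half R A m) w : R)%:E)%E.
  by rewrite integral_indic ?setIT //; exact: measurable_hit_half.
rewrite -ge0_integralZl_EFin ?divr_ge0 //; last exact/mind/measurable_hit_half.
have -> : (\sum_(i < m) P (A i) = \int[P]_w \sum_(i < m) (\1_(A i) w)%:E)%E.
  rewrite ge0_integral_sum //; last by move=> i; exact: mind.
  by apply: eq_bigr => i _; rewrite integral_indic // setIT.
apply: ge0_le_integral => //.
- by apply: emeasurable_funM; [exact: measurable_cst | exact/mind/measurable_hit_half].
- by apply: emeasurable_sum => i; exact: mind.
move=> w _; rewrite sumEFin -EFinM lee_fin indicE.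
case: (boolP (w \in hit_half R A m)) => [/set_mem w_hit|_]; first by rewrite mulr1.
by rewrite mulr0 sumr_ge0 // => i _; rewrite indicE.
Qed.

End MarkovCount.

Section FewJumps.
Context {d : measure_display} {T : measurableType d} {R : realType}.
Variables (P : probability T R) (X : nat -> T -> R).
Hypothesis mX : forall i, measurable_fun setT (X i).
Hypothesis X_exp1 : forall i, exp1_distributed P (X i).

Let measurable_le i (b : R) : measurable (X i @^-1` `]-oo, b]).
Proof. by rewrite -[_ @^-1` _]setTI; apply: mX => //; exact: measurable_itv. Qed.

Lemma exp1_le_prob i (b : R) : 0 <= b -> (P (X i @^-1` `]-oo, b]) <= b%:E)%E.
Proof.
move=> b_ge0; rewrite (X_exp1 i b) b_ge0 lee_fin.
by have := expR_ge1Dx (- b); lra.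
Qed.

Lemma exp1_nonpos_negligible : P.-negligible (\bigcup_i (X i @^-1` `]-oo, 0])).
Proof.
apply: negligible_bigcup => i; apply/negligibleP => //.
by have := X_exp1 i 0; rewrite lexx oppr0 expR0 subrr.
Qed.

Lemma few_jumps_unlikely (x : R) (m : nat) : 0 < x -> (0 < m)%N ->
  exists B : set T, [/\ measurable B, (P B <= (4 * x / m%:R)%:E)%E &
    forall w, ~ B w -> (forall i, 0 <= X i w) /\ x < jump_time (X^~ w) m].
Proof.
move=> x_gt0 m_gt0; have mR_gt0 : 0 < m%:R :> R by rewrite ltr0n.
set b := 2 * x / m%:R; set A := fun i => X i @^-1` `]-oo, b].
have b_ge0 : 0 <= b by rewrite /b divr_ge0 ?mulr_ge0 ?ltW.
have mA i : measurable (A i) := measurable_le i b.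
have [A0 [mA0 PA0 A0_cover]] := exp1_nonpos_negligible.
exists (A0 `|` hit_half R A m); split.
- exact: measurableU mA0 (measurable_hit_half m mA).
- apply: (le_trans (measureU2 _ mA0 (measurable_hit_half m mA))).
  rewrite [X in (X + _)%E](_ : _ = 0%E) ?add0e; last exact: PA0.
  have : ((m%:R / 2)%:E * P (hit_half R A m) <= (m%:R / 2)%:E * (2 * b)%:E)%E.
    apply: (le_trans (markov_hit_half P m mA)).
    apply: (@le_trans _ _ (\sum_(i < m) b%:E)%E).
      by apply: lee_sum => i _; exact: exp1_le_prob.
    by rewrite sumEFin sumr_const card_ord -EFinM lee_fin mulrA divfK ?mulr_natl ?pnatr_eq0.
  by rewrite lee_pmul2l ?lte_fin ?divr_gt0 // => /le_trans->; rewrite // lee_fin /b; lra.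
move=> w /not_orP[notA0 not_half].
have X_ge0 i : 0 <= X i w.
  rewrite leNgt; apply/negP => X_neg; apply: notA0; apply: A0_cover.
  by exists i; rewrite //= in_itv /= ltW.
split=> //; rewrite ltNge; apply/negP => J_le; apply: not_half.
rewrite /hit_half /= (eq_bigr (fun i : 'I_m => ((X i w <= b)%R)%:R)).
  exact: half_le_count_small m_gt0 x_gt0 X_ge0 J_le.
move=> i _; rewrite indicE; congr (nat_of_bool _)%:R.
by apply/idP/idP => [/set_mem|Xi_le]; [|apply/mem_set]; rewrite /A /= in_itv.
Qed.

End FewJumps.

Theorem proposition3p7 (R : realType) (d : measure_display) (T : measurableType d)
  (P : probability T R) (tau mu : R)
  (c : nat -> nat -> T -> R) (sig : nat -> nat -> T -> R) :
  0 < tau -> 0 <= mu ->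
  (forall N : nat,
     mutual_indep P (fun i : nat + nat =>
       match i with inl n => c N n | inr n => sig N n end) /\
     (forall n, fair_coin P (c N n)) /\
     (forall n, exp1_distributed P (sig N n))) ->
  forall Tm : R, 0 < Tm ->
    cvg_in_prob0 P (fun N w =>
      ereal_sup [set (`| integral_YZ (Lof tau N) N mu (fun n => c N n w)
                            (fun n => sig N n w) t |)%:E | t in `[0, Tm]]).
Proof.
move=> _ mu_ge0 law Tm Tm_gt0 eps delta eps_gt0 delta_gt0.
set k := (Num.truncn (4 * Tm / delta)).+1.
have k_large : 4 * Tm / delta < k%:R := truncnS_gt _.
exists (Num.truncn (mu * expR k%:R)).+1 => // N /= N_large.
have muN : mu * expR k%:R < N%:R.
  by apply: lt_le_trans (truncnS_gt _) _; rewrite ler_nat.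
have N_gt0 : (0 < N)%N.
  by rewrite -(ltr_nat R); apply: le_lt_trans muN; rewrite mulr_ge0 ?expR_ge0.
have NR_gt0 : 0 < N%:R :> R by rewrite ltr0n.
have [[msig _] [_ sig_exp1]] := law N.
have Nk_gt0 : (0 < N * k)%N by rewrite muln_gt0 N_gt0.
have [B [mB PB jumps_slow]] :=
  few_jumps_unlikely (fun i => msig (inr i)) sig_exp1 (mulr_gt0 NR_gt0 Tm_gt0) Nk_gt0.
exists B; split => //.
  move=> w /= sup_gt; apply: contrapT => notB; move: sup_gt; apply/negP; rewrite -leNgt.
  have [sig_ge0 slow] := jumps_slow w notB.
  apply: ge_ereal_sup => _ [t t_in <-].
  have t_range : 0 <= t <= Tm by move: t_in; rewrite /= in_itv.
  by rewrite (integral_YZ_eq0 _ _ N_gt0 mu_ge0 muN sig_ge0 slow t_range) normr0 lee_fin ltW.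
apply: le_lt_trans PB _; rewrite lte_fin natrM.
have -> : 4 * (N%:R * Tm) / (N%:R * k%:R) = 4 * Tm / k%:R.
  by field; apply/andP; split; rewrite pnatr_eq0 -lt0n.
have k_gt0 : 0 < k%:R :> R by rewrite ltr0n.
by move: k_large; rewrite !ltr_pdivrMr // [delta * _]mulrC.
Qed.
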